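(* Let $p$ be an odd prime, $a_1,a_2,a_3\in\mathbb{F}_p$, $s=3+a_1+a_2+a_3$, and let $x\neq(0,0,0)$ be a solution in $\mathbb{F}_p^3$ of \[ x_1^2+x_2^2+x_3^2+a_1x_2x_3+a_2x_1x_3+a_3x_1x_2 = s\,x_1x_2x_3 \] with $x_i = 0$ for some index $i$ (indices modulo $3$). Let $m_k$ ($k=1,2,3$) replace $x_k$ by $-x_k + s x_{k-1}x_{k+1} - a_{k+1}x_{k-1} - a_{k-1}x_{k+1}$ leaving the other coordinates unchanged, let $\rho = m_{i+1}\circ m_{i-1}$, and let $N$ be the order of $\rho$ as a permutation of the nonzero solutions with $i$-th coordinate $0$. If $N\geq 2$, then the $2N$ points \[ x,\ \rho x,\ \ldots,\ \rho^{N-1}x,\ m_{i-1}x,\ m_{i-1}\rho x,\ \ldots,\ m_{i-1}\rho^{N-1}x \] are pairwise distinct. *)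

From HB Require Import structures.
From mathcomp Require Import all_boot all_order all_algebra.
Set Implicit Arguments. Unset Strict Implicit. Unset Printing Implicit Defensive.
Import GRing.Theory.
Local Open Scope ring_scope.

(* Indices are 0-based: paper index k (1..3) is ordinal k-1 of 'I_3;
   arithmetic on indices is modulo 3 via ordS / ord_pred. *)
Definition nxt (k : 'I_3) : 'I_3 := ordS k.
Definition prv (k : 'I_3) : 'I_3 := ord_pred k.

Section Markov.
Variables (p : nat) (a : 'I_3 -> 'F_p).

Definition pt := {ffun 'I_3 -> 'F_p}.

Definition sval : 'F_p := 3%:R + a 0 + a 1 + a 2.

Definition is_sol (x : pt) : bool :=
  x 0 ^+ 2 + x 1 ^+ 2 + x 2 ^+ 2
  + a 0 * x 1 * x 2 + a 1 * x 0 * x 2 + a 2 * x 0 * x 1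
  == sval * x 0 * x 1 * x 2.

Definition mmove (k : 'I_3) (x : pt) : pt :=
  [ffun j => if j == k then
     - x k + sval * x (prv k) * x (nxt k)
       - a (nxt k) * x (prv k) - a (prv k) * x (nxt k)
   else x j].

Definition rho (i : 'I_3) (x : pt) : pt := mmove (nxt i) (mmove (prv i) x).

Definition Sset (i : 'I_3) : {set pt} :=
  [set y : pt | is_sol y && (y != [ffun => 0]) && (y i == 0)].

Definition is_rho_order (i : 'I_3) (N : nat) : Prop :=
  [/\ (0 < N)%N,
      (forall y, y \in Sset i -> iter N (rho i) y = y) &
      (forall n, (0 < n < N)%N -> exists2 y, y \in Sset i & iter n (rho i) y != y)].

End Markov.

(** On the face [x_i = 0] the surface reduces to the conic
    [x_{i-1}^2 + a_i x_{i-1} x_{i+1} + x_{i+1}^2 = 0], the union of the two lines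
    [x_{i-1} = s x_{i+1}] and [x_{i-1} = r x_{i+1}], where [s] and [r = -s - a_i = 1/s]
    are the roots of [T^2 + a_i T + 1].  The move [m_{i-1}] exchanges the two lines and
    [rho] is the homothety of ratio [r^2] on the first line and [s^2] on the second.
    Hence [r^2] is a primitive [N]-th root of unity, the points [rho^k x] and
    [m_{i-1} rho^k x] (k < N) are [r^(2k)] times [x] and [m_{i-1} x] respectively, and
    [x], [m_{i-1} x] are not proportional because [s <> r] when [N >= 2]. *)

From HB Require Import structures.
From mathcomp Require Import all_boot all_order all_algebra ring.
Set Implicit Arguments. Unset Strict Implicit. Unset Printing Implicit Defensive.
Local Open Scope ring_scope.
Import GRing.Theory.

Lemma nxtK : cancel nxt prv. Proof. exact: ordSK. Qed.

Lemma prvK : cancel prv nxt. Proof. exact: ord_predK. Qed.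

Lemma prv_prv (i : 'I_3) : prv (prv i) = nxt i.
Proof. by case: i => -[|[|[|]]] // ?; apply/val_inj. Qed.

Lemma nxt_nxt (i : 'I_3) : nxt (nxt i) = prv i.
Proof. by case: i => -[|[|[|]]] // ?; apply/val_inj. Qed.

Lemma prv_neq (i : 'I_3) : (prv i == i) = false.
Proof. by case: i => -[|[|[|]]]. Qed.

Lemma nxt_neq (i : 'I_3) : (nxt i == i) = false.
Proof. by case: i => -[|[|[|]]]. Qed.

Lemma prv_neq_nxt (i : 'I_3) : (prv i == nxt i) = false.
Proof. by case: i => -[|[|[|]]]. Qed.

Lemma ord3_cover (i j : 'I_3) : [\/ j = i, j = prv i | j = nxt i].
Proof.
by case: i j => -[|[|[|]]] // ? [[|[|[|]]] // ?];
  first [by apply: Or31; apply/val_inj | by apply: Or32; apply/val_inj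
        | by apply: Or33; apply/val_inj].
Qed.

Lemma ord3_rotations (i : 'I_3) :
  [\/ [/\ i = 0, prv i = 2 & nxt i = 1], [/\ i = 1, prv i = 0 & nxt i = 2]
    | [/\ i = 2, prv i = 1 & nxt i = 0]].
Proof.
by case: i => -[|[|[|]]] // ?;
  [constructor 1 | constructor 2 | constructor 3]; split; apply/val_inj.
Qed.

Section QuadraticRoots.

Variables (R : comPzRingType) (c s : R).
Hypothesis s_root : s ^+ 2 + c * s + 1 = 0.

Lemma eq_mod_root (x y k : R) : x - y = k * (s ^+ 2 + c * s + 1) -> x = y.
Proof. by rewrite s_root mulr0 => /eqP; rewrite subr_eq0 => /eqP. Qed.

Lemma conj_root_mul : (- s - c) * s = 1.
Proof. by apply: (eq_mod_root (k := -1)); ring. Qed.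

Lemma conj_root : (- s - c) ^+ 2 + c * (- s - c) + 1 = 0.
Proof. by apply: (eq_mod_root (k := 1)); ring. Qed.

Lemma root_factor (u v : R) :
  u ^+ 2 + c * u * v + v ^+ 2 = (u - s * v) * (u - (- s - c) * v).
Proof. by apply: (eq_mod_root (k := v ^+ 2)); ring. Qed.

Lemma neq_conj_root : (- s - c) ^+ 2 != 1 -> s != - s - c.
Proof. by apply: contra_neq => e; rewrite expr2 -{2}e conj_root_mul. Qed.

End QuadraticRoots.

Lemma uniq_scaled_orbits (F : fieldType) (I : finType) (t : F) (N : nat)
    (y z : {ffun I -> F}) (j0 j1 : I) :
  N.-primitive_root t -> y j0 = z j0 -> y j0 != 0 -> y j1 != z j1 ->
  uniq ([seq [ffun j => t ^+ k * y j] | k <- iota 0 N]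
        ++ [seq [ffun j => t ^+ k * z j] | k <- iota 0 N]).
Proof.
move=> t_prim yz0 y0 yz1.
have t_neq0 : t != 0 by rewrite (prim_root_eq0 t_prim) -lt0n (prim_order_gt0 t_prim).
have exp_inj : {in iota 0 N &, injective (fun k => t ^+ k)}.
  move=> j k; rewrite !mem_iota /= !add0n => jN kN /eqP.
  by rewrite (eq_prim_root_expr t_prim) !modn_small // => /eqP.
have scale_inj (w : {ffun I -> F}) : w j0 != 0 ->
    {in iota 0 N &, injective (fun k => [ffun j => t ^+ k * w j])}.
  move=> w0 j k jN kN /ffunP/(_ j0); rewrite !ffunE.
  by move/(mulIf w0); apply: exp_inj.
have z0 : z j0 != 0 by rewrite -yz0.
rewrite cat_uniq !map_inj_in_uniq ?iota_uniq /= ?andbT; [| exact: scale_inj ..].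
apply/hasPn => _ /mapP[k kN ->]; apply/mapP => -[j jN /ffunP e].
have jk : k = j by apply: exp_inj => //; move: (e j0); rewrite !ffunE yz0; apply: mulIf.
move: (e j1); rewrite !ffunE jk => /(mulfI (expf_neq0 _ t_neq0)) /esym /eqP.
by rewrite (negbTE yz1).
Qed.

Section Face.

Variables (p : nat) (a : 'I_3 -> 'F_p) (i : 'I_3).
Local Notation c := (a i).
Implicit Types (y : {ffun 'I_3 -> 'F_p}) (s t : 'F_p).

Lemma SsetP y : reflect [/\ is_sol a y, y != [ffun => 0] & y i = 0] (y \in Sset a i).
Proof.
rewrite inE; apply: (iffP idP) => [/andP[/andP[-> ->] /eqP ->] // | [-> -> ->]].
by rewrite eqxx.
Qed.

Lemma face_conic y : is_sol a y -> y i = 0 ->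
  y (prv i) ^+ 2 + c * y (prv i) * y (nxt i) + y (nxt i) ^+ 2 = 0.
Proof.
rewrite /is_sol -subr_eq0 => /eqP sol0 yi; rewrite -{}[RHS]sol0.
by case: (ord3_rotations i) yi => -[-> -> ->] yi; rewrite yi; ring.
Qed.

Lemma face_nxt_neq0 y : y \in Sset a i -> y (nxt i) != 0.
Proof.
case/SsetP => y_sol y_neq0 yi; apply: contraNneq y_neq0 => yn0.
have : y (prv i) ^+ 2 = 0 by rewrite -(face_conic y_sol yi) yn0; ring.
move/eqP; rewrite expf_eq0 /= => /eqP yp0.
by apply/eqP/ffunP => j; rewrite ffunE; case: (ord3_cover i j) => ->.
Qed.

Lemma face_slope y : y \in Sset a i ->
  exists2 s, s ^+ 2 + c * s + 1 = 0 & y (prv i) = s * y (nxt i).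
Proof.
move=> yS; have yn0 := face_nxt_neq0 yS; case/SsetP: yS => y_sol _ yi.
set s := y (prv i) / y (nxt i); exists s; last by rewrite divfK.
have : (s ^+ 2 + c * s + 1) * y (nxt i) ^+ 2 = 0.
  by rewrite -(face_conic y_sol yi) /s; field.
by move/eqP; rewrite mulf_eq0 expf_eq0 (negbTE yn0) orbF => /eqP.
Qed.

Lemma mmove_prv_face y : y i = 0 ->
  mmove a (prv i) y
  = [ffun j => if j == prv i then - y (prv i) - c * y (nxt i) else y j].
Proof.
move=> yi; apply/ffunP => j; rewrite !ffunE; case: eqP => // _.
by rewrite prv_prv prvK yi; ring.
Qed.

Lemma mmove_nxt_face y : y i = 0 ->
  mmove a (nxt i) y
  = [ffun j => if j == nxt i then - y (nxt i) - c * y (prv i) else y j].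
Proof.
move=> yi; apply/ffunP => j; rewrite !ffunE; case: eqP => // _.
by rewrite nxt_nxt nxtK yi; ring.
Qed.

Section Line.

Variable s : 'F_p.
Hypothesis s_root : s ^+ 2 + c * s + 1 = 0.

Lemma rho_line y : y i = 0 -> y (prv i) = s * y (nxt i) ->
  rho a i y = [ffun j => (- s - c) ^+ 2 * y j].
Proof.
move=> yi y_line; rewrite /rho mmove_prv_face // mmove_nxt_face; last first.
  by rewrite ffunE eq_sym prv_neq.
apply/ffunP => j; rewrite !ffunE.
case: (ord3_cover i j) => ->.
- by rewrite !(eq_sym i) nxt_neq prv_neq yi mulr0.
- rewrite prv_neq_nxt eqxx y_line.
  by apply: (eq_mod_root s_root (k := - (s + c) * y (nxt i))); ring.
- rewrite !eqxx eq_sym prv_neq_nxt y_line.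
  by apply: (eq_mod_root s_root (k := - y (nxt i))); ring.
Qed.

Lemma iter_rho_line y k : y i = 0 -> y (prv i) = s * y (nxt i) ->
  iter k (rho a i) y = [ffun j => ((- s - c) ^+ 2) ^+ k * y j].
Proof.
move=> yi y_line; elim: k => [|k IHk].
  by apply/ffunP => j; rewrite ffunE mul1r.
rewrite iterS IHk rho_line; last by rewrite !ffunE y_line mulrCA.
  by apply/ffunP => j; rewrite !ffunE mulrA -exprS.
by rewrite ffunE yi mulr0.
Qed.

End Line.

Lemma iter_rho_face_id s m : s ^+ 2 + c * s + 1 = 0 -> ((- s - c) ^+ 2) ^+ m = 1 ->
  {in Sset a i, forall y, iter m (rho a i) y = y}.
Proof.
move=> s_root tm1 y /SsetP[y_sol _ yi].
move: (face_conic y_sol yi); rewrite (root_factor s_root) => /eqP.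
rewrite mulf_eq0 !subr_eq0 => /orP[] /eqP y_line.
  by rewrite (iter_rho_line s_root) //; apply/ffunP => j; rewrite ffunE tm1 mul1r.
(* on the second line [rho] scales by [s^2], the inverse of [(-s - c)^2] *)
rewrite (iter_rho_line (conj_root s_root)) //; apply/ffunP => j; rewrite ffunE.
have -> : - (- s - c) - c = s by ring.
by rewrite -[_ ^+ m]mulr1 -tm1 -!exprMn [s * _]mulrC conj_root_mul // !expr1n mul1r.
Qed.

Lemma rho_order_prim_root s y N : s ^+ 2 + c * s + 1 = 0 -> is_rho_order a i N ->
  y \in Sset a i -> y (prv i) = s * y (nxt i) -> N.-primitive_root ((- s - c) ^+ 2).
Proof.
move=> s_root [N_gt0 rhoN_id rho_lt_N_id] yS y_line.
have yn0 := face_nxt_neq0 yS.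
have /SsetP[_ _ yi] := yS.
have tN1 : ((- s - c) ^+ 2) ^+ N = 1.
  apply: (mulIf yn0); rewrite mul1r.
  by move/ffunP/(_ (nxt i)): (rhoN_id y yS); rewrite (iter_rho_line s_root) // ffunE.
have [m t_prim m_dvd_N] := prim_order_exists N_gt0 tN1.
case: (ltngtP m N) => [m_lt_N | | <- //].
- have /rho_lt_N_id[z zS] : (0 < m < N)%N by rewrite (prim_order_gt0 t_prim).
  by rewrite (iter_rho_face_id s_root (prim_expr_order t_prim) zS) eqxx.
- by rewrite ltnNge (dvdn_leq N_gt0 m_dvd_N).
Qed.

Lemma mmove_prv_scale_face y t : y i = 0 ->
  mmove a (prv i) [ffun j => t * y j] = [ffun j => t * mmove a (prv i) y j].
Proof.
move=> yi; rewrite !mmove_prv_face ?ffunE ?yi ?mulr0 //.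
by apply/ffunP => j; rewrite !ffunE; case: eqP => // _; ring.
Qed.

End Face.

Theorem proposition2p2 (p : nat) (a : 'I_3 -> 'F_p) (i : 'I_3)
    (x : {ffun 'I_3 -> 'F_p}) (N : nat) :
  prime p -> odd p ->
  is_sol a x -> x != [ffun => 0] -> x i = 0 ->
  is_rho_order a i N -> (2 <= N)%N ->
  uniq ([seq iter k (rho a i) x | k <- iota 0 N]
        ++ [seq mmove a (prv i) (iter k (rho a i) x) | k <- iota 0 N]).
Proof.
move=> _ _ x_sol x_neq0 xi rho_order N_ge2.
have xS : x \in Sset a i by apply/SsetP.
have [s s_root x_line] := face_slope xS.
have t_prim := rho_order_prim_root s_root rho_order xS x_line.
have t_neq1 : (- s - a i) ^+ 2 != 1.
  by rewrite -[_ ^+ 2]expr1 -(prim_order_dvd t_prim) dvdn1 gtn_eqF.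
have orbit k := iter_rho_line s_root k xi x_line.
under eq_map => k do rewrite orbit.
under [X in _ ++ X]eq_map => k do rewrite orbit mmove_prv_scale_face //.
apply: (uniq_scaled_orbits (j0 := nxt i) (j1 := prv i) t_prim).
- by rewrite ffunE eq_sym prv_neq_nxt.
- exact: face_nxt_neq0 xS.
- rewrite mmove_prv_face // ffunE eqxx x_line.
  have -> : - (s * x (nxt i)) - a i * x (nxt i) = (- s - a i) * x (nxt i) by ring.
  by rewrite (inj_eq (mulIf (face_nxt_neq0 xS))) neq_conj_root.
Qed.
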